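(* Let $k,r\geq 1$, let $1\leq m\leq k$, let $1\le d\le r$, and let $I_d\subseteq\{1,\dots,r\}$ with $|I_d|=d$. Then for every $n\geq k$, $$\bigl|S_n^{(r)}\bigl(T_{k,r}^m(I_d)\bigr)\bigr|=(k-1)!\,r^{k-1}\prod_{j=k}^n\bigl((r-d)j+(k-1)d\bigr).$$
   Context: For $n,r\ge1$, $S_n^{(r)}$ denotes the set of coloured permutations of length $n$ with $r$ colours: sequences $\phi=(\phi_1,\dots,\phi_n)$ where $\phi_i=a_i^{(c_i)}$, $(a_1,\dots,a_n)$ is a permutation of $\{1,\dots,n\}$ and each $c_i\in\{1,\dots,r\}$ is the colour of $a_i$; so $|S_n^{(r)}|=n!\,r^n$. Write $|\phi|=(a_1,\dots,a_n)$. For $\phi=(\tau_1^{(s_1)},\dots,\tau_k^{(s_k)})\in S_k^{(r)}$ and $\psi=(\alpha_1^{(v_1)},\dots,\alpha_n^{(v_n)})\in S_n^{(r)}$, an occurrence of $\phi$ in $\psi$ is a sequence of indices $1\le i_1<\dots<i_k\le n$ such that $(\alpha_{i_1},\dots,\alpha_{i_k})$ is order-isomorphic to $(\tau_1,\dots,\tau_k)$ and $v_{i_j}=s_j$ for all $j=1,\dots,k$. $\psi$ contains $\phi$ if there is at least one occurrence, and avoids $\phi$ otherwise. For a set $T$ of coloured patterns, $S_n^{(r)}(T)$ is the set of $\psi\in S_n^{(r)}$ avoiding every $\phi\in T$. For $I_d\subseteq\{1,\dots,r\}$ with $|I_d|=d$ and $1\le m\le k$, $T_{k,r}^m(I_d)$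 is the set of all $\phi\in S_k^{(r)}$ whose first entry is $\phi_1=m^{(c)}$ for some colour $c\in I_d$. *)

From mathcomp Require Import all_boot all_order all_fingroup.
Set Implicit Arguments. Unset Strict Implicit. Unset Printing Implicit Defensive.

(* A coloured permutation of length n with r colours: positions are 'I_n,
   the underlying permutation (a_1..a_n) is given by p : 'S_n (a_{i+1} = p i,
   0-based values), and the colour of position i is c i : 'I_r
   (colours 0..r-1 stand for 1..r). *)
Definition cperm (n r : nat) : finType := ('S_n * {ffun 'I_n -> 'I_r})%type.

Definition occurrence (k n r : nat) (phi : cperm k r) (psi : cperm n r)
  (f : {ffun 'I_k -> 'I_n}) : bool :=
  [forall j1 : 'I_k, forall j2 : 'I_k, (j1 < j2)%N ==> (f j1 < f j2)%N] &&
  [forall j1 : 'I_k, forall j2 : 'I_k,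
     ((psi.1 (f j1) : nat) < psi.1 (f j2))%N == ((phi.1 j1 : nat) < phi.1 j2)%N] &&
  [forall j : 'I_k, psi.2 (f j) == phi.2 j].

Definition contains (k n r : nat) (psi : cperm n r) (phi : cperm k r) : bool :=
  [exists f : {ffun 'I_k -> 'I_n}, occurrence phi psi f].

Definition avoiders (k n r : nat) (T : {set cperm k r}) : {set cperm n r} :=
  [set psi : cperm n r | [forall phi in T, ~~ contains psi phi]].

(* T_{k,r}^m(I): patterns whose first entry is m^{(c)} with c in I
   (value m, 1-based, is m.-1 0-based; first position is index 0). *)
Definition Tpat (k r m : nat) (I : {set 'I_r}) : {set cperm k r} :=
  [set phi : cperm k r | [exists i : 'I_k,
     [&& val i == 0, val (phi.1 i) == m.-1 & phi.2 i \in I]]].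

(* A coloured permutation contains a pattern of T_{k,r}^m(I_d) exactly when some
   entry with colour in I_d has at least m - 1 smaller and at least k - m larger
   entries to its right.  Record at each position i its colour and its Lehmer code
   entry s (the number of smaller entries to its right); this is a bijection onto
   the product of the sets [r] x {0, ..., n - 1 - i}.  With L = n - i, the
   forbidden cells at position i are the colours of I_d together with
   m - 1 <= s <= L - 1 - (k - m), which leaves r L - d (L - k + 1) admissible
   cells; the product of these over L = 1, ..., n is the stated closed form. *)

From mathcomp Require Import all_boot all_order all_fingroup.
From mathcomp Require Import zify.
Set Implicit Arguments. Unset Strict Implicit. Unset Printing Implicit Defensive.

Lemma card_ord_range n a b : #|[set v : 'I_n | a <= v < b]| = minn b n - a.
Proof.
have -> : #|[set v : 'I_n | a <= v < b]| = count (fun v => a <= v < b) (iota 0 n).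
  rewrite -val_enum_ord count_map cardE /enum_mem size_filter count_filter.
  by apply: eq_count => v; rewrite !inE andbT.
elim: n => [|n IH]; first by rewrite minn0.
rewrite -addn1 iotaD count_cat IH /= add0n addn0.
by case: (leqP a n) => ?; case: (ltnP n b) => ? /=; lia.
Qed.

Lemma card_perm_lt n (p : 'S_n) x : #|[set y | p y < p x]| = p x.
Proof.
have -> : [set y | p y < p x] = p @^-1: [set v : 'I_n | 0 <= v < p x].
  by apply/setP => y; rewrite !inE.
by rewrite card_preimset ?card_ord_range; [have := ltn_ord (p x); lia | exact: perm_inj].
Qed.

Lemma card_perm_gt n (p : 'S_n) x : #|[set y | p x < p y]| = n - (p x).+1.
Proof.
have -> : [set y | p x < p y] = p @^-1: [set v : 'I_n | (p x).+1 <= v < n].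
  by apply/setP => y; rewrite !inE ltn_ord andbT.
by rewrite card_preimset ?card_ord_range; [lia | exact: perm_inj].
Qed.

Lemma card_preimset_inj (aT rT : finType) (f : aT -> rT) (B : {set rT}) :
  injective f -> #|f @^-1: B| = #|B :&: f @: setT|.
Proof.
move=> finj; rewrite -(card_imset _ finj); congr #|pred_of_set _|.
apply/setP => y; rewrite inE; apply/imsetP/andP => [[x Bx ->] | [By /imsetP[x _ Ey]]].
  by rewrite inE in Bx; rewrite Bx imset_f.
by exists x; rewrite // inE -Ey.
Qed.

Lemma exists_subset_card (T : finType) (A : {set T}) t :
  t <= #|A| -> exists2 B : {set T}, B \subset A & #|B| = t.
Proof.
move=> ltA; exists [set x in take t (enum A)].
  by apply/subsetP => x; rewrite inE => /mem_take; rewrite mem_enum.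
rewrite cardsE (card_uniqP (take_uniq _ (enum_uniq _))).
by rewrite size_takel // -cardE.
Qed.

Section RightCounts.
Variables (n : nat) (p : 'S_n).

Definition right_smaller (i : 'I_n) := #|[set j : 'I_n | (i < j) && (p j < p i)]|.
Definition right_larger (i : 'I_n) := #|[set j : 'I_n | (i < j) && (p i < p j)]|.

Lemma ltn_perm_swap (i j : 'I_n) : i != j -> (p i < p j) = ~~ (p j < p i).
Proof.
move=> neq_ij; rewrite -leqNgt ltn_neqAle andb_idl // => _.
by apply: contra neq_ij => /eqP/val_inj/perm_inj->.
Qed.

Lemma right_smaller_add_larger i : right_smaller i + right_larger i = n.-1 - i.
Proof.
rewrite /right_smaller /right_larger -cardsUI.
set S := [set j : 'I_n | _]; set L := [set j : 'I_n | _].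
have -> : S :&: L = set0.
  by apply/setP => j; rewrite !inE; case: (ltngtP (p j) (p i)); rewrite ?andbF.
have -> : S :|: L = [set j : 'I_n | i.+1 <= j < n].
  apply/setP => j; rewrite !inE ltn_ord andbT -andb_orr orbC.
  case: (ltnP i j) => //= lt_ij; rewrite ltn_perm_swap ?orNb //.
  by apply: contraTneq lt_ij => ->; rewrite ltnn.
by rewrite card_ord_range cards0 addn0; have := ltn_ord i; lia.
Qed.

Lemma right_smaller_le i : right_smaller i <= n.-1 - i.
Proof. by rewrite -right_smaller_add_larger leq_addr. Qed.

Lemma ltn_perm_right_smaller (i j : 'I_n) : i < j ->
  (p j < p i) = (#|[set l : 'I_n | (i < l) && (p l < p j)]| < right_smaller i).
Proof.
move=> lt_ij; case: (ltnP (p j) (p i)) => [lt_ji | le_ij].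
  apply/esym/proper_card/properP; split.
    by apply/subsetP => l; rewrite !inE => /andP[-> /ltn_trans->].
  by exists j; rewrite !inE ?lt_ij ?lt_ji ?ltnn.
apply/esym/negbTE; rewrite -leqNgt subset_leq_card //.
by apply/subsetP => l; rewrite !inE => /andP[-> /leq_trans->].
Qed.

End RightCounts.

Lemma right_smaller_inj n (p q : 'S_n) : right_smaller p =1 right_smaller q -> p = q.
Proof.
move=> Epq.
(* Descending induction: the codes at positions >= t determine the relative
   order of the entries there, by ltn_perm_right_smaller. *)
have agree t (j l : 'I_n) : n - t <= j -> n - t <= l -> (p j < p l) = (q j < q l).
  elim: t j l => [|t IH] j l; first by rewrite subn0 leqNgt ltn_ord.
  wlog lt_jl : j l / j < l.
    move=> W hj hl; case: (ltngtP j l) => [lt_jl | lt_lj | /val_inj->]; last by rewrite !ltnn.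
      exact: W.
    have neq_jl : j != l by apply: contraTneq lt_lj => ->; rewrite ltnn.
    by rewrite !(ltn_perm_swap _ neq_jl) W.
  move=> hj hl; have hl' : n - t <= l by lia.
  case: (leqP (n - t) j) => hj'; first exact: IH.
  have neq_jl : j != l by apply: contraTneq lt_jl => ->; rewrite ltnn.
  rewrite !(ltn_perm_swap _ neq_jl) !(ltn_perm_right_smaller _ lt_jl) Epq.
  congr (~~ (_ < _)); apply: eq_card => x; rewrite !inE.
  by case: (ltnP j x) => //= lt_jx; apply: IH => //; lia.
apply/permP => x; apply/val_inj; rewrite /= -(card_perm_lt p) -(card_perm_lt q).
by apply: eq_card => y; rewrite !inE (agree n) // subnn.
Qed.

Lemma enum_set_mono n k (S : {set 'I_n}) : #|S| = k ->
  exists2 f : 'I_k -> 'I_n, {mono f : a b / a < b} & f @: setT = S.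
Proof.
move=> cardS; pose f a := enum_val (cast_ord (esym cardS) a).
have lt_trans : transitive (fun x y : 'I_n => x < y) by move=> ???; exact: ltn_trans.
have sorted_S : sorted (fun x y : 'I_n => x < y) (enum S).
  apply: sorted_filter => //.
  by have := iota_ltn_sorted 0 n; rewrite -val_enum_ord sorted_map enumT.
have f_homo (a b : 'I_k) : a < b -> f a < f b.
  move=> lt_ab; have x0 := f a; rewrite /f !(enum_val_nth x0).
  by apply: (sorted_ltn_nth lt_trans) => //; rewrite inE -cardE ltn_ord.
have f_mono : {mono f : a b / a < b}.
  move=> a b; case: (ltngtP a b) => [/f_homo // | /f_homo/ltnW/leq_gtF // | /val_inj->].
  exact: ltnn.
have f_inj : injective f.
  move=> a b E; case: (ltngtP a b) => [/f_homo | /f_homo | /val_inj //];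
    by rewrite E ltnn.
exists f => //; apply/eqP; rewrite eqEcard card_imset // cardsT card_ord cardS leqnn andbT.
by apply/subsetP => _ /imsetP[a _ ->]; exact: enum_valP.
Qed.

Lemma exists_std_perm k (v : 'I_k -> nat) : injective v ->
  exists s : 'S_k, forall a b, (s a < s b) = (v a < v b).
Proof.
move=> vinj; pose rk a := #|[set b | v b < v a]|.
have rk_homo (a b : 'I_k) : v a < v b -> rk a < rk b.
  move=> lt_ab; apply/proper_card/properP; split.
    by apply/subsetP => c; rewrite !inE => /ltn_trans; apply.
  by exists a; rewrite !inE ?lt_ab ?ltnn.
have rk_mono (a b : 'I_k) : (rk a < rk b) = (v a < v b).
  case: (ltngtP (v a) (v b)) => [/rk_homo // | /rk_homo/ltnW | /vinj->];
    by rewrite ?ltnn // leqNgt => /negbTE.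
have rk_lt (a : 'I_k) : rk a < k.
  apply: (@leq_ltn_trans #|[set~ a]|).
    apply/subset_leq_card/subsetP => b; rewrite !inE.
    by apply: contraTneq => ->; rewrite ltnn.
  by rewrite cardsC1 card_ord; have := ltn_ord a; lia.
have g_inj : injective (fun a => Ordinal (rk_lt a)).
  move=> a b [E]; apply: vinj.
  by case: (ltngtP (v a) (v b)) => // /rk_homo; rewrite E ltnn.
by exists (perm g_inj) => a b; rewrite !permE rk_mono.
Qed.

Lemma occurrence_std k n r (psi : cperm n r) (f : 'I_k -> 'I_n) (s : 'S_k) :
  {mono f : a b / a < b} -> (forall a b, (s a < s b) = (psi.1 (f a) < psi.1 (f b))) ->
  occurrence (s, [ffun a => psi.2 (f a)]) psi [ffun a => f a].
Proof.
move=> f_mono s_ord; apply/andP; split; [apply/andP; split|]; apply/forallP => a.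
- by apply/forallP => b; rewrite !ffunE f_mono; exact/implyP.
- by apply/forallP => b; rewrite !ffunE s_ord.
- by rewrite !ffunE.
Qed.

Section Characterisation.
Variables (k r m : nat) (I : {set 'I_r}).
Hypothesis m_range : 1 <= m <= k.

Definition Tpat_start n (psi : cperm n r) (i : 'I_n) : bool :=
  [&& psi.2 i \in I, m.-1 <= right_smaller psi.1 i & k - m <= right_larger psi.1 i].

Lemma Tpat_contains_start n (psi : cperm n r) (phi : cperm k r) :
  phi \in Tpat k m I -> contains psi phi -> exists i, Tpat_start psi i.
Proof.
rewrite inE => /existsP[i0 /and3P[/eqP i0_0 /eqP phi_i0 I_i0]].
change (nat_of_ord (phi.1 i0) = m.-1) in phi_i0.
case/existsP=> f /andP[/andP[homo ord] col].
have f_homo (a b : 'I_k) : a < b -> f a < f b := implyP (forallP (forallP homo a) b).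
have f_ord (a b : 'I_k) : (psi.1 (f a) < psi.1 (f b)) = (phi.1 a < phi.1 b).
  exact: eqP (forallP (forallP ord a) b).
have f_col (a : 'I_k) : psi.2 (f a) = phi.2 a := eqP (forallP col a).
have f_lt (a : 'I_k) : i0 != a -> f i0 < f a.
  move=> ne; apply: f_homo; rewrite i0_0 lt0n; apply: contra ne => /eqP a0.
  by apply/eqP/val_inj; rewrite /= i0_0 a0.
have f_inj : injective f.
  move=> a b E; case: (ltngtP a b) => [/f_homo | /f_homo | /val_inj //]; by rewrite E ltnn.
have card_le (P : pred 'I_k) (Q : pred 'I_n) :
    (forall a, P a -> Q (f a)) -> #|[set a | P a]| <= #|[set x | Q x]|.
  move=> PQ; rewrite -(card_imset _ f_inj); apply/subset_leq_card/subsetP.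
  by move=> _ /imsetP[a Pa ->]; rewrite !inE in Pa *; exact: PQ.
exists (f i0); apply/and3P; split; first by rewrite f_col.
- rewrite -phi_i0 -(card_perm_lt phi.1 i0); apply: card_le => a lt_a.
  rewrite f_ord lt_a andbT f_lt //.
  by apply: contraTneq lt_a => <-; rewrite ltnn.
- have -> : k - m = k - (phi.1 i0).+1 by rewrite phi_i0; lia.
  rewrite -(card_perm_gt phi.1 i0); apply: card_le => a gt_a.
  rewrite f_ord gt_a andbT f_lt //.
  by apply: contraTneq gt_a => <-; rewrite ltnn.
Qed.

Lemma Tpat_start_support n (psi : cperm n r) (i : 'I_n) : Tpat_start psi i ->
  exists S : {set 'I_n}, [/\ #|S| = k, i \in S, {in S, forall x : 'I_n, i <= x}
                          & #|[set x | psi.1 x < psi.1 i] :&: S| = m.-1].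
Proof.
case/and3P=> _ small large; set p := psi.1.
have [A sub_A card_A] := exists_subset_card small.
have [B sub_B card_B] := exists_subset_card large.
have inA x : x \in A -> (i < x) && (p x < p i) by move/(subsetP sub_A); rewrite inE.
have inB x : x \in B -> (i < x) && (p i < p x) by move/(subsetP sub_B); rewrite inE.
have notB x : x \in B -> p x < p i = false.
  by case/inB/andP=> _ /ltnW; rewrite leqNgt => /negbTE.
exists (i |: (A :|: B)); split.
- rewrite cardsU1 cardsU (_ : A :&: B = set0) ?cards0 ?card_A ?card_B.
    have -> : i \in A :|: B = false.
      by rewrite inE; apply/negbTE/negP => /orP[/inA | /inB]; rewrite ltnn.
    by rewrite /=; lia.
  apply/setP => x; rewrite !inE; apply/negbTE/andP => [[/inA/andP[_ lt_x] /notB]].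
  by rewrite lt_x.
- exact: setU11.
- by move=> x; rewrite !inE => /orP[/eqP-> // | /orP[/inA | /inB] /andP[/ltnW]].
rewrite -card_A; congr #|pred_of_set _|; apply/setP => x; rewrite !inE.
case: (boolP (x \in A)) => [/inA/andP[_ ->] | _] /=; first by rewrite orbT.
case: (boolP (x \in B)) => [/notB -> // | _]; rewrite orbF andbC.
by case: eqP => [-> | _]; rewrite ?ltnn.
Qed.

Lemma Tpat_start_contains n (psi : cperm n r) (i : 'I_n) :
  Tpat_start psi i -> exists2 phi : cperm k r, phi \in Tpat k m I & contains psi phi.
Proof.
move=> start_i; have [S [card_S i_S ge_S small_S]] := Tpat_start_support start_i.
have [f f_mono f_S] := enum_set_mono card_S.
have k_gt0 : 0 < k by lia.
have f_i0 : f (Ordinal k_gt0) = i.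
  have /imsetP[j _ f_j] : i \in f @: setT by rewrite f_S.
  apply/val_inj/eqP; rewrite eqn_leq ge_S ?andbT; last by rewrite -f_S imset_f.
  by rewrite f_j leqNgt f_mono -leqNgt.
have v_inj : injective (fun a => psi.1 (f a) : nat).
  move=> a b /val_inj/perm_inj E; case: (ltngtP a b) => [|| /val_inj //];
    by rewrite -f_mono E ltnn.
have [s s_ord] := exists_std_perm v_inj.
exists (s, [ffun a => psi.2 (f a)]); last by apply/existsP; eexists; exact: occurrence_std.
rewrite inE; apply/existsP; exists (Ordinal k_gt0).
rewrite /= ffunE f_i0 (andP start_i).1 andbT -card_perm_lt -small_S -f_S.
rewrite -card_preimset_inj; last by move=> a b E; apply: v_inj; rewrite /= E.
by apply/eqP; apply: eq_card => a; rewrite !inE s_ord f_i0.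
Qed.

Lemma mem_avoiders_Tpat n (psi : cperm n r) :
  (psi \in avoiders n (Tpat k m I)) = [forall i, ~~ Tpat_start psi i].
Proof.
rewrite inE; apply/forallP/forallP => [avoid i | no_start phi].
  apply/negP => /Tpat_start_contains[phi T_phi contains_phi].
  by have := avoid phi; rewrite T_phi contains_phi.
apply/implyP => T_phi; apply/negP => /(Tpat_contains_start T_phi)[i start_i].
by have := no_start i; rewrite start_i.
Qed.

End Characterisation.

Definition family_set (aT rT : finType) (D : aT -> {set rT}) : {set {ffun aT -> rT}} :=
  [set h : {ffun aT -> rT} | [forall x, h x \in D x]].

Lemma card_family_set (aT rT : finType) (D : aT -> {set rT}) :
  #|family_set D| = \prod_x #|D x|.
Proof.
have -> : #|family_set D| = #|family (fun x => mem (D x))|.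
  by apply: eq_card => h; rewrite inE; apply/forallP/familyP.
by rewrite card_family foldrE big_map big_enum.
Qed.

Lemma prod_ord_rev (F : nat -> nat) n :
  \prod_(i < n) F (n - i) = \prod_(1 <= j < n.+1) F j.
Proof.
rewrite -(big_mkord xpredT (fun i => F (n - i))) big_add1 big_nat_rev /=.
apply: eq_big_nat => i /andP[_ lt_in].
by congr F; lia.
Qed.

Section Code.
Variables (n r : nat).

Definition cperm_code (psi : cperm n r) : {ffun 'I_n -> 'I_r * 'I_n.+1} :=
  [ffun i => (psi.2 i, inord (right_smaller psi.1 i))].

Definition code_cell (i : 'I_n) : {set 'I_r * 'I_n.+1} :=
  setX setT [set s : 'I_n.+1 | s <= n.-1 - i].

Lemma cperm_code_smaller psi i : (cperm_code psi i).2 = right_smaller psi.1 i :> nat.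
Proof.
rewrite ffunE inordK // ltnS (leq_trans (right_smaller_le _ _)) //.
exact: leq_trans (leq_subr _ _) (leq_pred n).
Qed.

Lemma cperm_code_inj : injective cperm_code.
Proof.
move=> [p c] [q d] E; congr (_, _).
  apply: right_smaller_inj => i.
  by rewrite -(cperm_code_smaller (p, c)) -(cperm_code_smaller (q, d)) E.
apply/ffunP => i.
by have := congr1 (fun h : {ffun 'I_n -> 'I_r * 'I_n.+1} => (h i).1) E; rewrite !ffunE.
Qed.

Lemma card_code_cell i : #|code_cell i| = r * (n - i).
Proof.
rewrite cardsX cardsT card_ord; congr (_ * _).
have -> : [set s : 'I_n.+1 | s <= n.-1 - i] = [set s : 'I_n.+1 | 0 <= s < (n.-1 - i).+1].
  by apply/setP => s; rewrite !inE.
by rewrite card_ord_range; have := ltn_ord i; lia.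
Qed.

Lemma family_code_cell_sub : family_set code_cell \subset cperm_code @: setT.
Proof.
suff -> : cperm_code @: setT = family_set code_cell by [].
apply/eqP; rewrite eqEcard; apply/andP; split.
  apply/subsetP => _ /imsetP[psi _ ->]; rewrite inE; apply/forallP => i.
  by rewrite !inE cperm_code_smaller right_smaller_le andbT.
rewrite card_imset; last exact: cperm_code_inj.
rewrite cardsT card_family_set (eq_bigr _ (fun i _ => card_code_cell i)).
rewrite (prod_ord_rev (muln r)) big_split /= prod_nat_const_nat -fact_prod subn1 /=.
by rewrite card_prod card_Sn card_ffun !card_ord mulnC.
Qed.

Variables (k m : nat) (I : {set 'I_r}).

Definition avoid_cell (i : 'I_n) : {set 'I_r * 'I_n.+1} :=
  code_cell i :\: setX I [set s : 'I_n.+1 | m.-1 <= s & s + (k - m) <= n.-1 - i].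

Lemma cperm_code_avoid_cell psi i :
  (cperm_code psi i \in avoid_cell i) = ~~ Tpat_start k m I psi i.
Proof.
have := right_smaller_add_larger psi.1 i.
rewrite /Tpat_start !inE cperm_code_smaller right_smaller_le ffunE /= andbT.
case: (psi.2 i \in I) => //=; move: (right_smaller _ _) (right_larger _ _) => a b ab.
by congr (~~ (_ && _)); apply/idP/idP; lia.
Qed.

Hypothesis m_range : 1 <= m <= k.

Lemma card_avoid_cell (i : 'I_n) : #|avoid_cell i| = r * (n - i) - #|I| * (n - i - k.-1).
Proof.
rewrite cardsD card_code_cell; congr (_ - _).
rewrite (setIidPr _); last first.
  apply/subsetP => -[c s]; rewrite !inE => /andP[_ /andP[_ le]].
  exact: leq_trans (leq_addr _ _) le.
rewrite cardsX; congr (_ * _).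
have -> : [set s : 'I_n.+1 | m.-1 <= s & s + (k - m) <= n.-1 - i] =
          [set s : 'I_n.+1 | m.-1 <= s < (n.-1 - i).+1 - (k - m)].
  by apply/setP => s; rewrite !inE; case: (m.-1 <= s) => //=; apply/idP/idP; lia.
by rewrite card_ord_range; have := ltn_ord i; lia.
Qed.

End Code.

Lemma card_avoiders_Tpat k r m n (I : {set 'I_r}) : 1 <= m <= k ->
  #|avoiders n (Tpat k m I)| = \prod_(1 <= j < n.+1) (r * j - #|I| * (j - k.-1)).
Proof.
move=> m_range.
have -> : avoiders n (Tpat k m I) = @cperm_code n r @^-1: family_set (avoid_cell k m I).
  apply/setP => psi; rewrite mem_avoiders_Tpat // !inE.
  by apply: eq_forallb => i; rewrite cperm_code_avoid_cell.
rewrite card_preimset_inj; last exact: cperm_code_inj.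
rewrite (setIidPl _); last first.
  apply: subset_trans (family_code_cell_sub n r); apply/subsetP => h.
  by rewrite !inE => /forallP avoid; apply/forallP => i; have := avoid i; rewrite inE => /andP[].
rewrite card_family_set (eq_bigr _ (fun i _ => card_avoid_cell I m_range i)).
exact: (prod_ord_rev (fun j => r * j - #|I| * (j - k.-1))).
Qed.

Lemma prod_cells_closed_form k r d n : 1 <= k <= n -> d <= r ->
  \prod_(1 <= j < n.+1) (r * j - d * (j - k.-1)) =
  (k.-1)`! * r ^ k.-1 * \prod_(k <= j < n.+1) ((r - d) * j + k.-1 * d).
Proof.
move=> /andP[k_gt0 le_kn] le_dr; rewrite (@big_cat_nat _ _ _ k) //=; last by lia.
congr (_ * _).
  rewrite (@eq_big_nat _ _ _ 1 k _ (muln r)); last first.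
    by move=> j /andP[_ lt_jk]; rewrite (_ : j - k.-1 = 0) ?muln0 ?subn0 //; lia.
  by rewrite big_split /= prod_nat_const_nat fact_prod prednK // mulnC subn1.
apply: eq_big_nat => j /andP[le_kj _].
have [a ->] : exists a, j = a + k.-1 by exists (j - k.-1); lia.
rewrite addnK mulnBl !mulnDr [k.-1 * d]mulnC.
have := leq_mul le_dr (leqnn a); have := leq_mul le_dr (leqnn k.-1).
move: (r * a) (d * a) (r * k.-1) (d * k.-1) => ra da rk dk; lia.
Qed.

Unset Implicit Arguments.

Theorem theorem1 (k r m d : nat) (I : {set 'I_r}) (n : nat) :
  (1 <= k)%N -> (1 <= r)%N -> (1 <= m <= k)%N -> (1 <= d <= r)%N ->
  #|I| = d -> (k <= n)%N ->
  #|avoiders n (Tpat k m I)| =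
    ((k.-1)`! * r ^ k.-1 * \prod_(k <= j < n.+1) ((r - d) * j + k.-1 * d))%N.
Proof.
move=> k_gt0 _ m_range /andP[_ le_dr] card_I le_kn.
by rewrite card_avoiders_Tpat // card_I prod_cells_closed_form ?k_gt0.
Qed.
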